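(* Let $\alpha^1,\dots,\alpha^p,\beta^1,\dots,\beta^p$ be smooth functions of $(t,x)$ such that $\sum_{s=1}^p(\alpha^s_i\beta^s_j-\alpha^s_j\beta^s_i)=0$ for all $0\le i<j\le p$, where subscripts denote orders of $x$-derivatives. Then $W(\alpha^1,\dots,\alpha^p,\beta^{s'})=0$ for every $s'\in\{1,\dots,p\}$.
   Context: The Wronskian with respect to $x$ of functions $\varphi^1,\dots,\varphi^l$ of $(t,x)$ is $W(\varphi^1,\dots,\varphi^l)=\det\bigl(\partial_x^{i}\varphi^j\bigr)_{i=0,\dots,l-1;\ j=1,\dots,l}$. *)

From HB Require Import structures.
From mathcomp Require Import all_boot all_order all_algebra.
From mathcomp Require Import all_classical all_reals all_analysis.
Set Implicit Arguments. Unset Strict Implicit. Unset Printing Implicit Defensive.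
Import Order.TTheory GRing.Theory Num.Theory.
Local Open Scope ring_scope.

Definition dx {R : realType} (n : nat) (f : R -> R -> R) (t x : R) : R :=
  derive1n n (f t) x.

Definition smooth_x {R : realType} (f : R -> R -> R) : Prop :=
  forall (t : R) (n : nat) (x : R), derivable (derive1n n (f t)) x 1.

Definition wronskian {R : realType} (l : nat) (phi : 'I_l -> R -> R -> R)
  (t x : R) : R :=
  \det (\matrix_(i < l, j < l) dx i (phi j) t x).

Definition append_fun {R : realType} (p : nat) (alpha : 'I_p -> R -> R -> R)
  (b : R -> R -> R) : 'I_(p + 1) -> R -> R -> R :=
  fun j => match fintype.split j with inl k => alpha k | inr _ => b end.

From HB Require Import structures.
From mathcomp Require Import all_boot all_order all_algebra.
From mathcomp Require Import all_classical all_reals all_analysis.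
Import Order.TTheory GRing.Theory Num.Theory.
Local Open Scope ring_scope.

(* The Wronskian matrix is [A | b] with A the (p+1) x p matrix of derivatives
   of the alpha^s and b a column of the matrix B of derivatives of the beta^s;
   the hypothesis says that A B^T is symmetric.  A row vector v <> 0 with
   v A = 0 exists for dimensional reasons, and symmetry gives
   A (v B)^T = B (v A)^T = 0.  If det [A | b] were nonzero, the columns of A
   would be independent, so v B = 0, hence v [A | b] = 0, a contradiction.
   The argument is pointwise linear algebra. *)

Section SymmetricProductDeterminant.

Variable F : fieldType.

Lemma tall_mx_left_kernel {m n} (A : 'M[F]_(m, n)) :
  (n < m)%N -> exists2 v : 'rV_m, v != 0 & v *m A = 0.
Proof.
move=> lt_nm; have : kermx A != 0.
  by rewrite kermx_eq0 /row_free neq_ltn (leq_ltn_trans (rank_leq_col A)).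
by case/rowV0Pn => v /sub_kermxP vA v_neq0; exists v.
Qed.

Lemma det_row_mx_inj {n} (A : 'M[F]_(n + 1, n)) (c : 'cV_(n + 1)) (u : 'cV_n) :
  \det (row_mx A c) != 0 -> A *m u = 0 -> u = 0.
Proof.
move=> det_neq0 Au0; have unitM : row_mx A c \in unitmx by rewrite unitmxE unitfE.
have : row_mx A c *m col_mx u 0 = 0 by rewrite mul_row_col mulmx0 addr0.
move/(congr1 (mulmx (invmx (row_mx A c)))); rewrite mulKmx // mulmx0.
by move/eqP; rewrite col_mx_eq0 => /andP[/eqP].
Qed.

Lemma sym_mulmx_trP {m n} (A B : 'M[F]_(m, n)) :
  (forall i j : 'I_m, (i < j)%N -> (A *m B^T) i j = (B *m A^T) i j) ->
  A *m B^T = B *m A^T.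
Proof.
have trAB : (A *m B^T)^T = B *m A^T by rewrite trmx_mul trmxK.
move=> sym_lt; apply/matrixP => i j.
case: (ltngtP i j) => [/sym_lt // | lt_ji | /ord_inj ->]; last by rewrite -trAB [RHS]mxE.
by rewrite -trAB [RHS]mxE (sym_lt _ _ lt_ji) -trAB [RHS]mxE.
Qed.

Lemma det_row_mx_sym_eq0 {n} (A B : 'M[F]_(n + 1, n)) (w : 'cV_n) :
  A *m B^T = B *m A^T -> \det (row_mx A (B *m w)) = 0.
Proof.
move=> symAB; have [v v_neq0 vA] : exists2 v : 'rV_(n + 1), v != 0 & v *m A = 0.
  by apply: tall_mx_left_kernel; rewrite addn1.
apply/eqP; apply/negPn/negP => det_neq0.
have vB : v *m B = 0.
  apply/trmx_inj; rewrite trmx0; apply: (det_row_mx_inj _ _ _ det_neq0).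
  by rewrite trmx_mul mulmxA symAB -mulmxA -trmx_mul vA trmx0 mulmx0.
move/det0P: det_neq0; apply; exists v => //.
by rewrite mul_mx_row vA mulmxA vB mul0mx row_mx0.
Qed.

End SymmetricProductDeterminant.

Theorem lemma7 (R : realType) (p : nat) (alpha beta : 'I_p -> R -> R -> R) :
  (forall s, smooth_x (alpha s)) ->
  (forall s, smooth_x (beta s)) ->
  (forall (i j : 'I_p.+1), (i < j)%N -> forall t x : R,
     \sum_(s < p) (dx i (alpha s) t x * dx j (beta s) t x
                   - dx j (alpha s) t x * dx i (beta s) t x) = 0) ->
  forall (s' : 'I_p) (t x : R), wronskian (append_fun alpha (beta s')) t x = 0.
Proof.
move=> _ _ bracket0 s' t x.
pose A := \matrix_(i < p + 1, s < p) dx i (alpha s) t x.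
pose B := \matrix_(i < p + 1, s < p) dx i (beta s) t x.
have -> : wronskian (append_fun alpha (beta s')) t x
          = \det (row_mx A (B *m delta_mx s' 0)).
  rewrite -colE /wronskian; congr (\det _); apply/matrixP => i j.
  by rewrite !mxE /append_fun; case: (fintype.split j) => k; rewrite !mxE.
apply: det_row_mx_sym_eq0; apply: sym_mulmx_trP => i j lt_ij.
rewrite !mxE; apply/eqP; rewrite -subr_eq0 -sumrB; apply/eqP.
apply: etrans _ (bracket0 (cast_ord (addn1 p) i) (cast_ord (addn1 p) j) lt_ij t x).
by apply: eq_bigr => s _; rewrite !mxE [dx i (beta s) t x * _]mulrC.
Qed.
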